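(* Let $\mathcal M\subset\mathbb R^3$ be the surface of revolution described in the context, and suppose $\mathcal M$ is symmetric about the $X$-$Y$ plane. Then for every integer $n\ge 1$ there exists a rotating $2n$-vortex solution (in the sense of the context) of the generalized point-vortex system $$d_i\,\dot{\mathbf p}_i=\frac{r_i^2}{\alpha_i^2}\left[(1-\alpha_i')\frac{\mathbf p_i^{\perp}}{r_i^2}+2\sum_{j\neq i}d_id_j\frac{(\mathbf p_i-\mathbf p_j)^{\perp}}{|\mathbf p_i-\mathbf p_j|^2}\right],\qquad i=1,\dots,2n,$$ whose orbits $C_\pm\subset\mathcal M$ (the images under $\mathbf P$ of the circles traced by the degree $+1$ and degree $-1$ vortices) are symmetric to each other about the $X$-$Y$ plane.
   Context: $\mathcal M$ is obtained by rotating about the $Z$-axis a regular curve $\gamma(s)=(\alpha(s),0,\beta(s))$, $0\le s\le l$, parametrized by arc length ($|\gamma'|=1$), with $\alpha(s)>0$ for $s\ne 0,l$ and $\alpha(0)=\alpha(l)=\beta'(0)=\beta'(l)=0$, so that $\mathcal M$ is a smooth simply connected compact surface without boundary. Let $S:[0,\pi]\to[0,l]$ solve $S'(\phi)\sin\phi=\alpha(S(\phi))$ with $S(0)=0$, $S(\pi)=l$. Define $\mathbf P:\mathbb R^2\cup\{\infty\}\to\mathcal M$ by $\mathbf P(x,y)=(\alpha(S(\phi))\cos\theta,\alpha(S(\phi))\sin\theta,\beta(S(\phi)))$, where $\theta$ is the polar angle of $(x,y)$ and $\cos\phi=\frac{1-r^2}{1+r^2}$, $r^2=x^2+y^2$ (inverse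 stereographic projection followed by a conformal map $\mathcal S^2\to\mathcal M$). For a planar point $\mathbf p_i$ with $r_i=|\mathbf p_i|$, write $\alpha_i=\alpha(S(\phi(\mathbf p_i)))$ and $\alpha_i'=\alpha'(S(\phi(\mathbf p_i)))$; $\mathbf v^\perp$ denotes the rotation of $\mathbf v\in\mathbb R^2$ by $\pi/2$. A rotating $2n$-vortex solution is a solution with degrees $d_i=1$ for $1\le i\le n$ and $d_i=-1$ for $n+1\le i\le 2n$, of the form $\mathbf p_i=r_1(\cos(\Theta_i+\omega_0t),\sin(\Theta_i+\omega_0t))$ for $1\le i\le n$ and $\mathbf p_{i}=r_2(\cos(\Theta_{i-n}+\omega_0t),\sin(\Theta_{i-n}+\omega_0t))$ for $n+1\le i\le 2n$, where $\Theta_i=\frac{2\pi}{n}(i-1)$ and $r_1,r_2,\omega_0$ are constants. *)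

From Stdlib Require Import Reals Lra List.
From Coquelicot Require Import Coquelicot.
Open Scope R_scope.

Definition vec2 := (R * R)%type.
Definition vec3 := (R * R * R)%type.

Definition perp (v : vec2) : vec2 := (- snd v, fst v).
Definition vsub (v w : vec2) : vec2 := (fst v - fst w, snd v - snd w).
Definition vadd (v w : vec2) : vec2 := (fst v + fst w, snd v + snd w).
Definition vscal (c : R) (v : vec2) : vec2 := (c * fst v, c * snd v).
Definition norm2sq (v : vec2) : R := fst v ^ 2 + snd v ^ 2.

Definition smooth (f : R -> R) : Prop := forall k x, ex_derive_n f k x.

Definition on_surface (alpha beta : R -> R) (l : R) (q : vec3) : Prop :=
  exists s th, 0 <= s <= l /\
    q = (alpha s * cos th, alpha s * sin th, beta s).

Definition reflXY (q : vec3) : vec3 := (fst (fst q), snd (fst q), - snd q).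

Definition phi_of (p : vec2) : R :=
  acos ((1 - norm2sq p) / (1 + norm2sq p)).

(* P(x,y) = (alpha(S phi) cos theta, alpha(S phi) sin theta, beta(S phi)),
   theta the polar angle of (x,y): cos theta = x/r, sin theta = y/r (r > 0);
   at the origin the value is the pole (0,0,beta(S 0)) (alpha(S 0) = 0). *)
Definition Pmap (alpha beta S : R -> R) (p : vec2) : vec3 :=
  let r := sqrt (norm2sq p) in
  let s := S (phi_of p) in
  if Req_EM_T r 0 then (0, 0, beta s)
  else (alpha s * (fst p / r), alpha s * (snd p / r), beta s).

Definition deg (n i : nat) : R := if (i <? n)%nat then 1 else -1.

(* rotating 2n-vortex configuration (0-indexed: vortex i+1 of the paper is i) *)
Definition rot_pos (n : nat) (r1 r2 w0 : R) (i : nat) (t : R) : vec2 :=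
  if (i <? n)%nat then
    (r1 * cos (2 * PI * INR i / INR n + w0 * t),
     r1 * sin (2 * PI * INR i / INR n + w0 * t))
  else
    (r2 * cos (2 * PI * INR (i - n) / INR n + w0 * t),
     r2 * sin (2 * PI * INR (i - n) / INR n + w0 * t)).

Definition vortex_rhs (alpha S : R -> R) (N : nat) (d : nat -> R)
    (p : nat -> vec2) (i : nat) : vec2 :=
  let pi := p i in
  let r2 := norm2sq pi in
  let ai := alpha (S (phi_of pi)) in
  let ai' := Derive alpha (S (phi_of pi)) in
  let interaction :=
    fold_right vadd (0, 0)
      (map (fun j => if Nat.eqb j i then (0, 0) else
              vscal (2 * d i * d j / norm2sq (vsub pi (p j)))
                    (perp (vsub pi (p j))))
           (seq 0 N)) in
  vscal (r2 / ai ^ 2) (vadd (vscal ((1 - ai') / r2) (perp pi)) interaction).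

Definition solves_vortex_system (alpha S : R -> R) (N : nat) (d : nat -> R)
    (p : nat -> R -> vec2) : Prop :=
  forall (i : nat) (t : R), (i < N)%nat ->
    exists v : vec2,
      is_derive (fun u => fst (p i u)) t (fst v) /\
      is_derive (fun u => snd (p i u)) t (snd v) /\
      vscal (d i) v = vortex_rhs alpha S N d (fun j => p j t) i.

Definition orbit (alpha beta S : R -> R) (rho : R) (q : vec3) : Prop :=
  exists th, q = Pmap alpha beta S (rho * cos th, rho * sin th).

From Stdlib Require Import Reals Lra Lia List.
From Coquelicot Require Import Coquelicot.
Open Scope R_scope.

(* The mirror symmetry of M pairs a profile point s with a point s' at the same
   distance alpha from the axis and opposite height.  Near the poles this
   pairing reparametrises the profile curve, so the tangents at s and s' are
   mirror images and alpha'(s') = - alpha'(s).  Put the n vortices of degree +1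
   equally spaced on the circle of latitude of s and those of degree -1 at the
   same angles on the circle of latitude of s'.  By the symmetry k <-> n - k of
   a ring the induced velocity of every vortex is tangential, so each ring
   rotates rigidly, and the two angular speeds demanded by the rings coincide
   because the tangential cross-ring interactions, weighted by the radii, add
   up to -2n whatever the radii, while alpha' changes sign.  The orbits are
   the images of circles at mirror latitudes, hence mirror images of each
   other. *)

Lemma continuous_eps (f : R -> R) x : continuous f x ->
  forall e, 0 < e -> exists d, 0 < d /\ forall y, Rabs (y - x) < d -> Rabs (f y - f x) < e.
Proof.
  intros Hc e He.
  assert (Hpt : continuity_pt f x) by now apply continuity_pt_filterlim.
  destruct (Hpt e He) as [d [Hd Hy]]. exists d; split; [lra|].
  intros y Hyx. destruct (Req_dec y x) as [->|Hne].
  - rewrite !Rminus_diag, Rabs_R0; lra.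
  - apply (Hy y); repeat split; auto.
Qed.

Lemma continuous_product_eps (u v : R -> R) x0 y0 :
  continuous u x0 -> continuous v y0 -> forall e, 0 < e ->
  exists d, 0 < d /\ forall x y, Rabs (x - x0) < d -> Rabs (y - y0) < d ->
    Rabs (u x * v y - u x0 * v y0) < e.
Proof.
  intros Hu Hv e He.
  assert (Huv : continuous (fun p : R * R => u (fst p) * v (snd p)) (x0, y0)).
  { apply (continuous_mult (fun p : R * R => u (fst p)) (fun p => v (snd p))).
    - apply (continuous_comp fst u), Hu. apply continuous_fst.
    - apply (continuous_comp snd v), Hv. apply continuous_snd. }
  destruct (proj1 (filterlim_locally _ _) Huv (mkposreal e He)) as [d Hd].
  exists d; split; [apply cond_pos|]. intros x y Hx Hy.
  exact (Hd (x, y) (conj Hx Hy)).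
Qed.

Lemma MVT_is_derive (f df : R -> R) (a b : R) :
  (forall x, is_derive f x (df x)) ->
  exists c, Rmin a b <= c <= Rmax a b /\ f b - f a = df c * (b - a).
Proof.
  intros Hf. apply MVT_gen; intros x _; [apply Hf|].
  apply continuity_pt_filterlim, (ex_derive_continuous f x). eexists; apply Hf.
Qed.

Lemma Rmin_Rmax_dist a b c : Rmin a b <= c <= Rmax a b -> Rabs (c - a) <= Rabs (b - a).
Proof. unfold Rmin, Rmax, Rabs; repeat destruct Rle_dec; repeat destruct Rcase_abs; lra. Qed.

Lemma Rmin_Rmax_in u v a b c : u <= a <= v -> u <= b <= v ->
  Rmin a b <= c <= Rmax a b -> u <= c <= v.
Proof. unfold Rmin, Rmax; destruct Rle_dec; lra. Qed.

Lemma smooth_is_derive f : smooth f -> forall x, is_derive f x (Derive f x).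
Proof. intros Hf x. apply Derive_correct, (Hf 1%nat x). Qed.

Lemma smooth_Derive_continuous f : smooth f -> forall x, continuous (Derive f) x.
Proof. intros Hf x. apply (ex_derive_continuous (Derive f) x), (Hf 2%nat x). Qed.

Lemma smooth_continuity_pt f : smooth f -> forall x, continuity_pt f x.
Proof.
  intros Hf x. apply continuity_pt_filterlim, (ex_derive_continuous f x), (Hf 1%nat x).
Qed.

Lemma Derive_sign_at_root f a b : smooth f -> f a = 0 ->
  (forall t, 0 < t < 1 -> 0 < f (a + t * (b - a))) -> 0 <= Derive f a * (b - a).
Proof.
  intros Hf Ha Hpos. apply Rnot_lt_le. intros Hneg.
  assert (Hg : continuous (fun c => Derive f c * (b - a)) a).
  { apply (continuous_mult (Derive f) (fun _ => b - a)).
    - apply smooth_Derive_continuous, Hf.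
    - apply continuous_const. }
  destruct (continuous_eps _ _ Hg (- (Derive f a * (b - a)))) as [d [Hd Hnear]]; [lra|].
  assert (Hba : 0 < Rabs (b - a)).
  { apply Rabs_pos_lt. intros E. rewrite E, Rmult_0_r in Hneg. lra. }
  set (t := d / (d + 2 * Rabs (b - a))).
  assert (Ht : 0 < t < 1).
  { unfold t; split; [apply Rdiv_lt_0_compat; lra|].
    apply Rmult_lt_reg_r with (d + 2 * Rabs (b - a)); [lra|].
    unfold Rdiv; rewrite Rmult_assoc, Rinv_l; lra. }
  assert (Hstep : t * Rabs (b - a) < d).
  { unfold t. apply Rmult_lt_reg_r with (d + 2 * Rabs (b - a)); [lra|].
    field_simplify; [nra|lra]. }
  destruct (MVT_is_derive f (Derive f) a (a + t * (b - a)) (smooth_is_derive f Hf)) as [c [Hc Ec]].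
  apply Rmin_Rmax_dist in Hc.
  replace (a + t * (b - a) - a) with (t * (b - a)) in Hc, Ec by ring.
  rewrite Rabs_mult, (Rabs_pos_eq t) in Hc by lra.
  specialize (Hnear c ltac:(lra)). apply Rabs_def2 in Hnear.
  specialize (Hpos t Ht). rewrite Ha in Ec. nra.
Qed.

Lemma Derive_nonzero_injective f a b : smooth f ->
  (forall c, a <= c <= b -> Derive f c <> 0) ->
  forall x y, a <= x <= b -> a <= y <= b -> f x = f y -> x = y.
Proof.
  intros Hf Hd x y Hx Hy E.
  destruct (MVT_is_derive f (Derive f) x y (smooth_is_derive f Hf)) as [c [Hc Ec]].
  rewrite E, Rminus_diag in Ec. symmetry in Ec.
  apply Rmult_integral in Ec as [Ec|Ec]; [|lra].
  exfalso. exact (Hd c (Rmin_Rmax_in a b x y c Hx Hy Hc) Ec).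
Qed.

Lemma mean_value_cross (f1 f2 g1 g2 df1 df2 dg1 dg2 : R -> R) (s0 t0 h k : R) :
  (forall x, is_derive f1 x (df1 x)) -> (forall x, is_derive f2 x (df2 x)) ->
  (forall x, is_derive g1 x (dg1 x)) -> (forall x, is_derive g2 x (dg2 x)) -> h <> 0 ->
  f1 (s0 + h) - f1 s0 = g1 (t0 + k) - g1 t0 ->
  f2 (s0 + h) - f2 s0 = g2 (t0 + k) - g2 t0 ->
  exists x1 x2 y1 y2,
    Rabs (x1 - s0) <= Rabs h /\ Rabs (x2 - s0) <= Rabs h /\
    Rabs (y1 - t0) <= Rabs k /\ Rabs (y2 - t0) <= Rabs k /\
    df1 x1 * dg2 y2 = df2 x2 * dg1 y1.
Proof.
  intros Hf1 Hf2 Hg1 Hg2 Hh E1 E2.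
  destruct (MVT_is_derive f1 df1 s0 (s0 + h) Hf1) as [x1 [Hx1 Ex1]].
  destruct (MVT_is_derive f2 df2 s0 (s0 + h) Hf2) as [x2 [Hx2 Ex2]].
  destruct (MVT_is_derive g1 dg1 t0 (t0 + k) Hg1) as [y1 [Hy1 Ey1]].
  destruct (MVT_is_derive g2 dg2 t0 (t0 + k) Hg2) as [y2 [Hy2 Ey2]].
  apply Rmin_Rmax_dist in Hx1, Hx2, Hy1, Hy2.
  replace (s0 + h - s0) with h in Hx1, Hx2, Ex1, Ex2 by ring.
  replace (t0 + k - t0) with k in Hy1, Hy2, Ey1, Ey2 by ring.
  exists x1, x2, y1, y2. do 4 (split; [assumption|]).
  apply Rmult_eq_reg_r with h; [|exact Hh].
  transitivity (dg1 y1 * k * dg2 y2); [rewrite <- Ey1, <- E1, Ex1; ring|].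
  transitivity (dg2 y2 * k * dg1 y1); [ring|rewrite <- Ey2, <- E2, Ex2; ring].
Qed.

(* Two curves through a common point, the second following the first with a
   Lipschitz reparametrisation, have parallel tangents there: pass to the limit
   in [mean_value_cross]. *)
Lemma tangents_parallel (f1 f2 g1 g2 df1 df2 dg1 dg2 : R -> R) (s0 t0 K : R) :
  (forall x, is_derive f1 x (df1 x)) -> (forall x, is_derive f2 x (df2 x)) ->
  (forall x, is_derive g1 x (dg1 x)) -> (forall x, is_derive g2 x (dg2 x)) ->
  continuous df1 s0 -> continuous df2 s0 -> continuous dg1 t0 -> continuous dg2 t0 ->
  (forall d, 0 < d -> exists h k, 0 < h < d /\ Rabs k <= K * h /\
     f1 (s0 + h) - f1 s0 = g1 (t0 + k) - g1 t0 /\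
     f2 (s0 + h) - f2 s0 = g2 (t0 + k) - g2 t0) ->
  df1 s0 * dg2 t0 = df2 s0 * dg1 t0.
Proof.
  intros Hf1 Hf2 Hg1 Hg2 Cf1 Cf2 Cg1 Cg2 Hfollow.
  set (z := df1 s0 * dg2 t0 - df2 s0 * dg1 t0).
  apply Rminus_diag_uniq. fold z. destruct (Req_dec z 0) as [|Hz]; [assumption|exfalso].
  assert (He : 0 < Rabs z / 2) by (pose proof (Rabs_pos_lt z Hz); lra).
  destruct (continuous_product_eps _ _ _ _ Cf1 Cg2 _ He) as [d1 [Hd1 Near1]].
  destruct (continuous_product_eps _ _ _ _ Cf2 Cg1 _ He) as [d2 [Hd2 Near2]].
  set (dm := Rmin d1 d2).
  assert (Hdm : 0 < dm) by (apply Rmin_pos; lra).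
  assert (Hdm1 : dm <= d1) by apply Rmin_l. assert (Hdm2 : dm <= d2) by apply Rmin_r.
  pose proof (Rabs_pos K) as HK. pose proof (Rle_abs K) as HKabs.
  destruct (Hfollow (dm / (Rabs K + 1))) as [h [k [Hh [Hk [E1 E2]]]]].
  { apply Rdiv_lt_0_compat; lra. }
  assert (Hhd : (Rabs K + 1) * h < dm).
  { apply Rmult_lt_reg_r with (/ (Rabs K + 1)); [apply Rinv_0_lt_compat; lra|].
    replace ((Rabs K + 1) * h * / (Rabs K + 1)) with h by (field; lra). lra. }
  destruct (mean_value_cross f1 f2 g1 g2 df1 df2 dg1 dg2 s0 t0 h k)
    as [x1 [x2 [y1 [y2 [Hx1 [Hx2 [Hy1 [Hy2 Hsame]]]]]]]]; try assumption; [lra|].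
  rewrite (Rabs_pos_eq h) in Hx1, Hx2 by lra.
  specialize (Near1 x1 y2 ltac:(nra) ltac:(nra)).
  specialize (Near2 x2 y1 ltac:(nra) ltac:(nra)).
  rewrite Hsame in Near1.
  assert (Htri : Rabs z <= Rabs (df2 x2 * dg1 y1 - df2 s0 * dg1 t0)
                        + Rabs (df2 x2 * dg1 y1 - df1 s0 * dg2 t0)).
  { unfold z. rewrite (Rabs_minus_sym (df2 x2 * dg1 y1) (df1 s0 * dg2 t0)).
    replace (df1 s0 * dg2 t0 - df2 s0 * dg1 t0) with
      ((df1 s0 * dg2 t0 - df2 x2 * dg1 y1) + (df2 x2 * dg1 y1 - df2 s0 * dg1 t0)) by ring.
    rewrite Rplus_comm. apply Rabs_triang. }
  lra.
Qed.

Lemma parallel_to_mirror_unit_vector (a1 b1 a2 b2 : R) :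
  a1 ^ 2 + b1 ^ 2 = 1 -> a2 ^ 2 + b2 ^ 2 = 1 -> a1 * b2 + b1 * a2 = 0 ->
  0 < a1 -> a2 < 0 -> a2 = - a1.
Proof.
  intros H1 H2 Hpar Ha1 Ha2.
  assert (E : a1 ^ 2 * b2 ^ 2 = b1 ^ 2 * a2 ^ 2).
  { replace (a1 ^ 2 * b2 ^ 2) with ((a1 * b2) ^ 2) by ring.
    replace (a1 * b2) with (- (b1 * a2)) by lra. ring. }
  assert (Hsq : a1 ^ 2 = a2 ^ 2) by nra.
  nra.
Qed.

Section ProfileCurve.

Variables (alpha beta : R -> R) (l : R).
Hypothesis hl : 0 < l.
Hypothesis halpha : smooth alpha.
Hypothesis hbeta : smooth beta.
Hypothesis harc : forall s, 0 <= s <= l -> Derive alpha s ^ 2 + Derive beta s ^ 2 = 1.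
Hypothesis hpos : forall s, 0 < s < l -> 0 < alpha s.
Hypothesis ha0 : alpha 0 = 0.
Hypothesis hal : alpha l = 0.
Hypothesis hb0 : Derive beta 0 = 0.
Hypothesis hbl : Derive beta l = 0.
Hypothesis hsym : forall q, on_surface alpha beta l q -> on_surface alpha beta l (reflXY q).

Lemma alpha_nonneg s : 0 <= s <= l -> 0 <= alpha s.
Proof.
  intros Hs. destruct (Req_dec s 0) as [->|H0]; [lra|].
  destruct (Req_dec s l) as [->|H1]; [lra|].
  left. apply hpos. lra.
Qed.

Lemma profile_mirror s : 0 <= s <= l ->
  exists s', 0 <= s' <= l /\ alpha s' = alpha s /\ beta s' = - beta s.
Proof.
  intros Hs.
  assert (Hq : on_surface alpha beta l (alpha s * cos 0, alpha s * sin 0, beta s))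
    by (exists s, 0; split; auto).
  destruct (hsym _ Hq) as [s' [th [Hs' E]]].
  unfold reflXY in E; simpl in E. rewrite cos_0, sin_0 in E.
  injection E as E1 E2 E3.
  exists s'. split; [exact Hs'|split; [|lra]].
  pose proof (sin2_cos2 th) as Hsc. unfold Rsqr in Hsc.
  pose proof (alpha_nonneg s' Hs'). pose proof (alpha_nonneg s Hs).
  assert (Hsq : alpha s' * alpha s' = alpha s * alpha s).
  { transitivity (alpha s' * alpha s' * (sin th * sin th + cos th * cos th)); [rewrite Hsc; ring|].
    rewrite <- (Rmult_1_r (alpha s)), E1. nra. }
  nra.
Qed.

Lemma Derive_alpha_bound s : 0 <= s <= l -> Rabs (Derive alpha s) <= 1.
Proof. intros Hs. pose proof (harc s Hs). apply Rabs_le. nra. Qed.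

Lemma alpha_le_id s : 0 <= s <= l -> alpha s <= s.
Proof.
  intros Hs. destruct (MVT_is_derive alpha (Derive alpha) 0 s (smooth_is_derive _ halpha)) as [c [Hc Ec]].
  assert (Hc' : 0 <= c <= l) by (apply (Rmin_Rmax_in 0 l 0 s c); lra).
  pose proof (Derive_alpha_bound c Hc') as Hb. apply Rabs_le_between in Hb.
  rewrite ha0 in Ec. nra.
Qed.

Lemma Derive_alpha_0 : Derive alpha 0 = 1.
Proof.
  assert (Hsq : Derive alpha 0 ^ 2 = 1).
  { pose proof (harc 0 ltac:(lra)) as Harc0. rewrite hb0 in Harc0. lra. }
  assert (Hsign : 0 <= Derive alpha 0 * (l - 0)).
  { apply Derive_sign_at_root; auto. intros t Ht. apply hpos. nra. }
  nra.
Qed.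

Lemma Derive_alpha_l : Derive alpha l = -1.
Proof.
  assert (Hsq : Derive alpha l ^ 2 = 1).
  { pose proof (harc l ltac:(lra)) as Harcl. rewrite hbl in Harcl. lra. }
  assert (Hsign : 0 <= Derive alpha l * (0 - l)).
  { apply Derive_sign_at_root; auto. intros t Ht. apply hpos. nra. }
  nra.
Qed.

Lemma alpha_monotone_near_poles : exists ep, 0 < ep < l / 2 /\
  (forall y, 0 <= y <= ep -> 1 / 2 <= Derive alpha y) /\
  (forall y, l - ep <= y <= l -> Derive alpha y <= - 1 / 2).
Proof.
  destruct (continuous_eps _ _ (smooth_Derive_continuous _ halpha 0) (1 / 2)) as [d1 [Hd1 Near0]]; [lra|].
  destruct (continuous_eps _ _ (smooth_Derive_continuous _ halpha l) (1 / 2)) as [d2 [Hd2 Nearl]]; [lra|].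
  rewrite Derive_alpha_0 in Near0. rewrite Derive_alpha_l in Nearl.
  set (ep := Rmin (Rmin (d1 / 2) (d2 / 2)) (l / 3)).
  assert (ep <= Rmin (d1 / 2) (d2 / 2)) by apply Rmin_l. assert (ep <= l / 3) by apply Rmin_r.
  pose proof (Rmin_l (d1 / 2) (d2 / 2)). pose proof (Rmin_r (d1 / 2) (d2 / 2)).
  assert (0 < ep) by (repeat apply Rmin_pos; lra).
  exists ep. split; [lra|split].
  - intros y Hy. specialize (Near0 y ltac:(rewrite Rabs_right; lra)).
    apply Rabs_def2 in Near0. lra.
  - intros y Hy. specialize (Nearl y ltac:(rewrite Rabs_left1; lra)).
    apply Rabs_def2 in Nearl. lra.
Qed.

Section NearPoles.

Variable ep : R.
Hypothesis hep : 0 < ep < l / 2.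
Hypothesis hinc : forall y, 0 <= y <= ep -> 1 / 2 <= Derive alpha y.
Hypothesis hdec : forall y, l - ep <= y <= l -> Derive alpha y <= - 1 / 2.

(* Near the pole [s = 0] the mirror image of a profile point lies near the pole
   [s = l]: [alpha] takes small values only near the poles and is injective
   near each of them. *)
Lemma mirror_near_pole_l : exists e, 0 < e <= ep /\ forall s, 0 < s < e ->
  exists s', l - ep <= s' < l /\ alpha s' = alpha s /\ beta s' = - beta s.
Proof.
  destruct (continuity_ab_min alpha ep (l - ep) ltac:(lra)
     (fun c _ => smooth_continuity_pt _ halpha c)) as [mx [Hmx Hmx_in]].
  assert (Hm : 0 < alpha mx) by (apply hpos; lra).
  assert (Hsmall : forall s, 0 <= s <= l -> alpha s < alpha mx -> s < ep \/ l - ep < s).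
  { intros s Hs Ha. destruct (Rlt_dec s ep); auto. destruct (Rlt_dec (l - ep) s); auto.
    pose proof (Hmx s ltac:(lra)). lra. }
  assert (Hinj0 : forall x y, 0 <= x <= ep -> 0 <= y <= ep -> alpha x = alpha y -> x = y).
  { apply (Derive_nonzero_injective _ _ _ halpha). intros c Hc. pose proof (hinc c Hc). lra. }
  assert (Hinjl : forall x y, l - ep <= x <= l -> l - ep <= y <= l -> alpha x = alpha y -> x = y).
  { apply (Derive_nonzero_injective _ _ _ halpha). intros c Hc. pose proof (hdec c Hc). lra. }
  set (e := Rmin ep (alpha mx)).
  assert (He1 : e <= ep) by apply Rmin_l. assert (He2 : e <= alpha mx) by apply Rmin_r.
  assert (He : 0 < e) by (apply Rmin_pos; lra).
  exists e. split; [lra|]. intros s Hs.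
  assert (Has : 0 < alpha s) by (apply hpos; lra).
  assert (Has_small : alpha s < alpha mx) by (pose proof (alpha_le_id s ltac:(lra)); lra).
  destruct (IVT_gen alpha (l - ep) l (alpha s) (smooth_continuity_pt _ halpha)) as [s' [Hs' Es']].
  { pose proof (Hmx (l - ep) ltac:(lra)). rewrite Rmin_right, Rmax_left; lra. }
  rewrite Rmin_left, Rmax_right in Hs' by lra.
  assert (Hs'l : s' < l) by (destruct (Req_dec s' l) as [->|]; [rewrite hal in Es'; lra|lra]).
  exists s'. split; [lra|split; [exact Es'|]].
  destruct (profile_mirror s ltac:(lra)) as [t [Ht [Et1 Et2]]].
  destruct (Hsmall t Ht ltac:(lra)) as [Htn|Htn].
  - assert (t = s) by (apply Hinj0; lra). subst t.
    destruct (profile_mirror s' ltac:(lra)) as [u [Hu [Eu1 Eu2]]].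
    destruct (Hsmall u Hu ltac:(lra)) as [Hun|Hun].
    + assert (u = s) by (apply Hinj0; lra). subst u. lra.
    + assert (u = s') by (apply Hinjl; lra). subst u. lra.
  - assert (t = s') by (apply Hinjl; lra). subst t. lra.
Qed.

Lemma mirror_pair_near_poles : exists s1 s2, 0 < s1 < l /\ 0 < s2 < l /\ s1 <> s2 /\
  alpha s2 = alpha s1 /\ beta s2 = - beta s1 /\ Derive alpha s2 = - Derive alpha s1.
Proof.
  destruct mirror_near_pole_l as [e [He Hmirror]].
  destruct (Hmirror (e / 2) ltac:(lra)) as [s2 [Hs2 [Ea Eb]]].
  exists (e / 2), s2. do 3 (split; [lra|]). split; [exact Ea|split; [exact Eb|]].
  assert (Hcross : Derive alpha (e / 2) * - Derive beta s2 = Derive beta (e / 2) * Derive alpha s2).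
  { apply (tangents_parallel alpha beta alpha (fun x => - beta x)
             (Derive alpha) (Derive beta) (Derive alpha) (fun x => - Derive beta x) _ _ 2).
    1-3: apply smooth_is_derive; assumption.
    - intros x. apply (is_derive_opp beta), smooth_is_derive, hbeta.
    - 1-3: apply smooth_Derive_continuous; assumption.
    - apply (continuous_opp (Derive beta)), smooth_Derive_continuous, hbeta.
    - intros d Hd. set (h := Rmin (d / 2) (e / 4)).
      assert (h <= d / 2) by apply Rmin_l. assert (h <= e / 4) by apply Rmin_r.
      assert (0 < h) by (apply Rmin_pos; lra).
      destruct (Hmirror (e / 2 + h) ltac:(lra)) as [s' [Hs' [Ea' Eb']]].
      exists h, (s' - s2). replace (s2 + (s' - s2)) with s' by ring.
      split; [lra|split; [|split; lra]].
      destruct (MVT_is_derive alpha (Derive alpha) (e / 2) (e / 2 + h) (smooth_is_derive _ halpha)) as [x [Hx Ex]].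
      destruct (MVT_is_derive alpha (Derive alpha) s2 s' (smooth_is_derive _ halpha)) as [y [Hy Ey]].
      pose proof (hdec y (Rmin_Rmax_in (l - ep) l s2 s' y ltac:(lra) ltac:(lra) Hy)) as Hdy.
      pose proof (Derive_alpha_bound x (Rmin_Rmax_in 0 l (e / 2) (e / 2 + h) x ltac:(lra) ltac:(lra) Hx)) as Hbx.
      apply Rabs_le_between in Hbx.
      replace (e / 2 + h - e / 2) with h in Ex by ring.
      assert (Ek : Derive alpha y * (s' - s2) = Derive alpha x * h) by lra.
      destruct (Rle_dec s' s2); [rewrite Rabs_left1 by lra|rewrite Rabs_right by lra]; nra. }
  pose proof (hinc (e / 2) ltac:(lra)). pose proof (hdec s2 ltac:(lra)).
  apply (parallel_to_mirror_unit_vector _ (Derive beta (e / 2)) _ (Derive beta s2));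
    [apply harc; lra|apply harc; lra|lra|lra|lra].
Qed.

End NearPoles.

Lemma mirror_pair : exists s1 s2, 0 < s1 < l /\ 0 < s2 < l /\ s1 <> s2 /\
  alpha s2 = alpha s1 /\ beta s2 = - beta s1 /\ Derive alpha s2 = - Derive alpha s1.
Proof.
  destruct alpha_monotone_near_poles as [ep [Hep [Hinc Hdec]]].
  exact (mirror_pair_near_poles ep Hep Hinc Hdec).
Qed.

End ProfileCurve.

Definition clamp_PI (z : R) : R := Rmax 0 (Rmin PI z).

Lemma clamp_PI_range z : 0 <= clamp_PI z <= PI.
Proof. pose proof PI_RGT_0. unfold clamp_PI, Rmax, Rmin. repeat destruct Rle_dec; lra. Qed.

Lemma clamp_PI_id z : 0 <= z <= PI -> clamp_PI z = z.
Proof. intros Hz. unfold clamp_PI, Rmax, Rmin. repeat destruct Rle_dec; lra. Qed.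

Lemma clamp_PI_lipschitz y x : Rabs (clamp_PI y - clamp_PI x) <= Rabs (y - x).
Proof.
  pose proof PI_RGT_0. unfold clamp_PI, Rmax, Rmin.
  repeat destruct Rle_dec; unfold Rabs; repeat destruct Rcase_abs; lra.
Qed.

Lemma filterlim_clamp_PI x :
  filterlim clamp_PI (locally x) (within (fun z => 0 <= z <= PI) (locally (clamp_PI x))).
Proof.
  intros P [eps HP]. exists eps. intros y Hy. apply HP; [|apply clamp_PI_range].
  apply (Rle_lt_trans _ _ _ (clamp_PI_lipschitz y x)), Hy.
Qed.

Lemma S_onto_interior (S : R -> R) (l s : R) :
  (forall ph, 0 <= ph <= PI ->
     filterlim S (within (fun x => 0 <= x <= PI) (locally ph)) (locally (S ph))) ->
  S 0 = 0 -> S PI = l -> 0 < s < l -> exists ph, 0 < ph < PI /\ S ph = s.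
Proof.
  intros hS_cont hS0 hSpi Hs. pose proof PI_RGT_0.
  assert (Hg : continuity (fun z => S (clamp_PI z))).
  { intros x. apply continuity_pt_filterlim.
    apply (filterlim_comp _ _ _ clamp_PI S _ _ _ (filterlim_clamp_PI x)), hS_cont, clamp_PI_range. }
  destruct (IVT_gen _ 0 PI s Hg) as [ph [Hph Eph]].
  { rewrite !clamp_PI_id, hS0, hSpi by lra. rewrite Rmin_left, Rmax_right; lra. }
  rewrite Rmin_left, Rmax_right in Hph by lra. rewrite clamp_PI_id in Eph by lra.
  exists ph. split; [split|exact Eph].
  - destruct (Req_dec ph 0) as [->|]; [rewrite hS0 in Eph; lra|lra].
  - destruct (Req_dec ph PI) as [->|]; [rewrite hSpi in Eph; lra|lra].
Qed.

(* Radius of the circle of latitude [ph] under stereographic projection. *)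
Definition stereo_radius (ph : R) : R := sqrt ((1 - cos ph) / (1 + cos ph)).

Lemma cos_open_interval ph : 0 < ph < PI -> -1 < cos ph < 1.
Proof.
  intros H. pose proof PI_RGT_0. pose proof (COS_bound ph) as [Hlo Hhi]. split.
  - destruct (Req_dec (cos ph) (-1)) as [E|]; [|lra].
    assert (ph = PI) by (apply cos_inj; try lra; rewrite cos_PI; auto). lra.
  - destruct (Req_dec (cos ph) 1) as [E|]; [|lra].
    assert (ph = 0) by (apply cos_inj; try lra; rewrite cos_0; auto). lra.
Qed.

Lemma stereo_radius_pos ph : 0 < ph < PI -> 0 < stereo_radius ph.
Proof.
  intros H. pose proof (cos_open_interval ph H). apply sqrt_lt_R0, Rdiv_lt_0_compat; lra.
Qed.

Definition ring_pt (rho th : R) : vec2 := (rho * cos th, rho * sin th).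

Lemma norm2sq_ring_pt rho th : norm2sq (ring_pt rho th) = rho ^ 2.
Proof.
  unfold norm2sq, ring_pt; simpl. pose proof (sin2_cos2 th) as H. unfold Rsqr in H.
  transitivity (rho * rho * (sin th * sin th + cos th * cos th)); [ring|rewrite H; ring].
Qed.

Lemma phi_of_ring_pt ph th : 0 < ph < PI -> phi_of (ring_pt (stereo_radius ph) th) = ph.
Proof.
  intros H. pose proof (cos_open_interval ph H).
  unfold phi_of. rewrite norm2sq_ring_pt. unfold stereo_radius.
  rewrite <- Rsqr_pow2, Rsqr_sqrt by (apply Rlt_le, Rdiv_lt_0_compat; lra).
  replace ((1 - (1 - cos ph) / (1 + cos ph)) / (1 + (1 - cos ph) / (1 + cos ph)))
    with (cos ph) by (field; lra).
  apply acos_cos. lra.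
Qed.

Lemma stereo_radius_injective ph1 ph2 : 0 < ph1 < PI -> 0 < ph2 < PI ->
  stereo_radius ph1 = stereo_radius ph2 -> ph1 = ph2.
Proof.
  intros H1 H2 E.
  rewrite <- (phi_of_ring_pt ph1 0 H1), <- (phi_of_ring_pt ph2 0 H2), E. reflexivity.
Qed.

Lemma Pmap_circle alpha beta S ph th : 0 < ph < PI ->
  Pmap alpha beta S (stereo_radius ph * cos th, stereo_radius ph * sin th) =
  (alpha (S ph) * cos th, alpha (S ph) * sin th, beta (S ph)).
Proof.
  intros Hph. pose proof (stereo_radius_pos ph Hph) as Hr.
  unfold Pmap. fold (ring_pt (stereo_radius ph) th).
  rewrite phi_of_ring_pt, norm2sq_ring_pt, sqrt_pow2 by lra.
  destruct (Req_EM_T (stereo_radius ph) 0); [lra|].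
  simpl. f_equal. f_equal; field; lra.
Qed.

Lemma orbits_mirror alpha beta S ph1 ph2 : 0 < ph1 < PI -> 0 < ph2 < PI ->
  alpha (S ph2) = alpha (S ph1) -> beta (S ph2) = - beta (S ph1) ->
  forall q, orbit alpha beta S (stereo_radius ph1) q <->
            orbit alpha beta S (stereo_radius ph2) (reflXY q).
Proof.
  intros H1 H2 Ea Eb q. unfold orbit.
  split; intros [th Eq]; exists th.
  - subst q. rewrite !Pmap_circle, Ea, Eb by assumption. reflexivity.
  - rewrite Pmap_circle in Eq |- * by assumption. rewrite Ea, Eb in Eq.
    destruct q as [[x y] z]. unfold reflXY in Eq; simpl in Eq.
    injection Eq as -> -> E3. f_equal. lra.
Qed.

Definition rsum (g : nat -> R) (n : nat) : R := fold_right Rplus 0 (map g (seq 0 n)).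

Lemma rsum_0 g : rsum g 0 = 0.
Proof. reflexivity. Qed.

Lemma rsum_S g n : rsum g (S n) = rsum g n + g n.
Proof.
  unfold rsum. rewrite seq_S, map_app, fold_right_app. simpl.
  induction (map g (seq 0 n)); simpl; lra.
Qed.

Lemma rsum_Sl g n : rsum g (S n) = g 0%nat + rsum (fun k => g (S k)) n.
Proof. unfold rsum. simpl. rewrite <- seq_shift, map_map. reflexivity. Qed.

Lemma rsum_ext g h n : (forall k, (k < n)%nat -> g k = h k) -> rsum g n = rsum h n.
Proof.
  intros H. unfold rsum. f_equal. apply map_ext_in. intros k Hk.
  apply in_seq in Hk. apply H. lia.
Qed.

Lemma rsum_plus g h n : rsum (fun k => g k + h k) n = rsum g n + rsum h n.
Proof. induction n; [rewrite !rsum_0; ring|rewrite !rsum_S, IHn; ring]. Qed.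

Lemma rsum_scal_l c g n : rsum (fun k => c * g k) n = c * rsum g n.
Proof. induction n; [rewrite !rsum_0; ring|rewrite !rsum_S, IHn; ring]. Qed.

Lemma rsum_scal_r c g n : rsum (fun k => g k * c) n = rsum g n * c.
Proof. induction n; [rewrite !rsum_0; ring|rewrite !rsum_S, IHn; ring]. Qed.

Lemma rsum_opp g n : rsum (fun k => - g k) n = - rsum g n.
Proof. induction n; [rewrite !rsum_0; ring|rewrite !rsum_S, IHn; ring]. Qed.

Lemma rsum_const c n : rsum (fun _ => c) n = INR n * c.
Proof. induction n; [rewrite rsum_0; simpl; ring|rewrite rsum_S, IHn, S_INR; ring]. Qed.

Lemma rsum_rotate g n i : (forall k, g (k + n)%nat = g k) ->
  rsum g n = rsum (fun k => g (k + i)%nat) n.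
Proof.
  intros Hper. induction i.
  - apply rsum_ext. intros k _. rewrite Nat.add_0_r. reflexivity.
  - rewrite IHi. set (h := fun k => g (k + i)%nat).
    assert (Hhn : h n = h 0%nat) by (unfold h; simpl; rewrite Nat.add_comm; apply Hper).
    pose proof (rsum_S h n) as E1. rewrite rsum_Sl in E1.
    transitivity (rsum (fun k => h (S k)) n); [lra|].
    apply rsum_ext. intros k _. unfold h. f_equal. lia.
Qed.

Lemma rsum_rev g n : rsum g n = rsum (fun k => g (n - 1 - k)%nat) n.
Proof.
  revert g. induction n; intros g; [reflexivity|].
  rewrite rsum_Sl, rsum_S, IHn. replace (S n - 1 - n)%nat with 0%nat by lia.
  rewrite Rplus_comm. f_equal. apply rsum_ext. intros k Hk. f_equal. lia.
Qed.

Lemma rsum_antisym g n : g 0%nat = 0 ->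
  (forall k, (1 <= k < n)%nat -> g (n - k)%nat = - g k) -> rsum g n = 0.
Proof.
  intros H0 Hanti. destruct n as [|m]; [reflexivity|].
  rewrite rsum_Sl, H0.
  assert (E : rsum (fun k => g (S k)) m = - rsum (fun k => g (S k)) m).
  { rewrite rsum_rev at 1. rewrite <- rsum_opp. apply rsum_ext. intros k Hk.
    replace (S (m - 1 - k)) with (S m - S k)%nat by lia. apply Hanti. lia. }
  lra.
Qed.

Lemma fold_vadd_map (F : nat -> vec2) n :
  fold_right vadd (0, 0) (map F (seq 0 n)) = (rsum (fun j => fst (F j)) n, rsum (fun j => snd (F j)) n).
Proof.
  unfold rsum. induction (seq 0 n) as [|j js IH]; [reflexivity|].
  simpl. rewrite IH. reflexivity.
Qed.

Lemma fold_vadd_app l1 l2 : fold_right vadd (0, 0) (l1 ++ l2) =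
  vadd (fold_right vadd (0, 0) l1) (fold_right vadd (0, 0) l2).
Proof.
  induction l1 as [|v l1 IH]; simpl.
  - destruct (fold_right vadd (0, 0) l2). unfold vadd; simpl; f_equal; ring.
  - rewrite IH. unfold vadd; simpl; f_equal; ring.
Qed.

Lemma vadd_vscal a b v : vadd (vscal a v) (vscal b v) = vscal (a + b) v.
Proof. unfold vadd, vscal; simpl; f_equal; ring. Qed.

Definition ang (n k : nat) : R := 2 * PI * INR k / INR n.

Lemma ang_0 n : ang n 0 = 0.
Proof. unfold ang. simpl. unfold Rdiv. ring. Qed.

Lemma ang_sub n i j : (0 < n)%nat -> (i <= j)%nat -> ang n (j - i) = ang n j - ang n i.
Proof.
  intros Hn Hij. unfold ang. rewrite minus_INR by lia.
  assert (0 < INR n) by (apply lt_0_INR; lia). field. lra.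
Qed.

Lemma ang_bounds n k : (0 < k < n)%nat -> 0 < ang n k < 2 * PI.
Proof.
  intros Hk. unfold ang. pose proof PI_RGT_0.
  assert (0 < INR k) by (apply lt_0_INR; lia).
  assert (INR k < INR n) by (apply lt_INR; lia).
  split; [apply Rdiv_lt_0_compat; nra|].
  apply Rmult_lt_reg_r with (INR n); [lra|].
  unfold Rdiv. rewrite Rmult_assoc, Rinv_l by lra. nra.
Qed.

Lemma cos_ang_neq_1 n k : (0 < k < n)%nat -> cos (ang n k) <> 1.
Proof.
  intros Hk E. pose proof PI_RGT_0. pose proof (ang_bounds n k Hk) as Hb.
  destruct (Rle_dec (ang n k) PI).
  - assert (ang n k = 0) by (apply cos_inj; try lra; rewrite cos_0; auto). lra.
  - assert (2 * PI - ang n k = 0).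
    { apply cos_inj; try lra. rewrite cos_0, cos_minus, cos_2PI, sin_2PI. lra. }
    lra.
Qed.

Lemma cos_2PI_periodic x : cos (x + 2 * PI) = cos x.
Proof. rewrite cos_plus, cos_2PI, sin_2PI; ring. Qed.

Lemma sin_2PI_periodic x : sin (x + 2 * PI) = sin x.
Proof. rewrite sin_plus, cos_2PI, sin_2PI; ring. Qed.

Lemma rsum_ang_shift (F : R -> R) n i : (0 < n)%nat -> (forall x, F (x + 2 * PI) = F x) ->
  rsum (fun j => F (ang n j - ang n i)) n = rsum (fun k => F (ang n k)) n.
Proof.
  intros Hn Hper. assert (0 < INR n) by (apply lt_0_INR; lia).
  rewrite (rsum_rotate _ n i).
  - apply rsum_ext. intros k _. f_equal. unfold ang. rewrite plus_INR. field. lra.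
  - intros k. replace (ang n (k + n) - ang n i) with (ang n k - ang n i + 2 * PI)
      by (unfold ang; rewrite plus_INR; field; lra).
    apply Hper.
Qed.

Lemma rsum_ang_sin (F : R -> R) n : (0 < n)%nat ->
  rsum (fun k => sin (ang n k) * F (cos (ang n k))) n = 0.
Proof.
  intros Hn. apply rsum_antisym; [rewrite ang_0, sin_0; ring|].
  intros k Hk. replace (ang n (n - k)) with (- ang n k + 2 * PI).
  - rewrite cos_2PI_periodic, sin_2PI_periodic, cos_neg, sin_neg. ring.
  - rewrite ang_sub by lia. unfold ang. field. apply not_0_INR. lia.
Qed.

Definition biot_savart (c : R) (p q : vec2) : vec2 :=
  vscal (c / norm2sq (vsub p q)) (perp (vsub p q)).

Lemma biot_savart_self c p : biot_savart c p p = (0, 0).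
Proof. unfold biot_savart, vscal, perp, vsub; simpl; f_equal; ring. Qed.

Lemma vortex_rhs_biot_savart alpha S N d p i :
  vortex_rhs alpha S N d p i =
  vscal (norm2sq (p i) / alpha (S (phi_of (p i))) ^ 2)
    (vadd (vscal ((1 - Derive alpha (S (phi_of (p i)))) / norm2sq (p i)) (perp (p i)))
          (fold_right vadd (0, 0) (map (fun j => biot_savart (2 * d i * d j) (p i) (p j)) (seq 0 N)))).
Proof.
  unfold vortex_rhs. do 3 f_equal. apply map_ext. intros j.
  destruct (Nat.eqb_spec j i) as [->|]; [symmetry; apply biot_savart_self|reflexivity].
Qed.

(* Components of [biot_savart c (ring_pt rho a) (ring_pt rho' (a + th))] along
   the tangential and radial unit vectors at angle [a]. *)
Definition pair_tangential (rho rho' c th : R) : R :=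
  c * (rho - rho' * cos th) / (rho ^ 2 + rho' ^ 2 - 2 * rho * rho' * cos th).

Definition pair_radial (rho rho' c th : R) : R :=
  c * (rho' * sin th) / (rho ^ 2 + rho' ^ 2 - 2 * rho * rho' * cos th).

Lemma biot_savart_ring_pt rho rho' c a th :
  biot_savart c (ring_pt rho a) (ring_pt rho' (a + th)) =
  vadd (vscal (pair_tangential rho rho' c th) (perp (cos a, sin a)))
       (vscal (pair_radial rho rho' c th) (cos a, sin a)).
Proof.
  unfold biot_savart, ring_pt. rewrite cos_plus, sin_plus.
  assert (HD : norm2sq (vsub (rho * cos a, rho * sin a)
      (rho' * (cos a * cos th - sin a * sin th), rho' * (sin a * cos th + cos a * sin th)))
    = rho ^ 2 + rho' ^ 2 - 2 * rho * rho' * cos th).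
  { unfold norm2sq, vsub; simpl.
    pose proof (sin2_cos2 a) as Ha. pose proof (sin2_cos2 th) as Hth. unfold Rsqr in *.
    transitivity (rho ^ 2 * (sin a * sin a + cos a * cos a)
      + rho' ^ 2 * (sin th * sin th + cos th * cos th) * (sin a * sin a + cos a * cos a)
      - 2 * rho * rho' * cos th * (sin a * sin a + cos a * cos a)); [ring|].
    rewrite Ha, Hth. ring. }
  rewrite HD. unfold pair_tangential, pair_radial, vadd, vscal, perp, vsub; simpl.
  f_equal; unfold Rdiv; ring.
Qed.

(* The radial components cancel by the symmetry [k <-> n - k] of the ring. *)
Lemma biot_savart_ring_sum rho rho' c w n i : (0 < n)%nat -> 0 < rho ->
  fold_right vadd (0, 0)
    (map (fun j => biot_savart c (ring_pt rho (ang n i + w)) (ring_pt rho' (ang n j + w))) (seq 0 n))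
  = vscal (rsum (fun k => pair_tangential rho rho' c (ang n k)) n / rho)
          (perp (ring_pt rho (ang n i + w))).
Proof.
  intros Hn Hrho. set (a := ang n i + w).
  set (th := fun j => ang n j - ang n i).
  rewrite (map_ext _ (fun j => vadd (vscal (pair_tangential rho rho' c (th j)) (perp (cos a, sin a)))
                                    (vscal (pair_radial rho rho' c (th j)) (cos a, sin a)))).
  2:{ intros j. rewrite <- biot_savart_ring_pt.
      replace (ang n j + w) with (a + th j) by (unfold th, a; ring). reflexivity. }
  rewrite fold_vadd_map. simpl.
  assert (Htan : rsum (fun j => pair_tangential rho rho' c (th j)) n
                 = rsum (fun k => pair_tangential rho rho' c (ang n k)) n).
  { apply (rsum_ang_shift (pair_tangential rho rho' c)); [exact Hn|].
    intros x. unfold pair_tangential. rewrite cos_2PI_periodic. reflexivity. }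
  assert (Hrad : rsum (fun j => pair_radial rho rho' c (th j)) n = 0).
  { unfold th. rewrite (rsum_ang_shift (pair_radial rho rho' c)); [|exact Hn|].
    - rewrite <- (rsum_ang_sin (fun x => c * rho' / (rho ^ 2 + rho' ^ 2 - 2 * rho * rho' * x)) n Hn).
      apply rsum_ext. intros k _. unfold pair_radial, Rdiv. ring.
    - intros x. unfold pair_radial. rewrite cos_2PI_periodic, sin_2PI_periodic. reflexivity. }
  rewrite !rsum_plus, !rsum_scal_r, Htan, Hrad.
  unfold vscal, perp, ring_pt; simpl. f_equal; field; lra.
Qed.

Lemma rsum_pair_tangential_same rho c n : 0 < rho -> (0 < n)%nat ->
  rsum (fun k => pair_tangential rho rho c (ang n k)) n = INR (n - 1) * (c / (2 * rho)).
Proof.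
  intros Hrho Hn. destruct n as [|m]; [lia|].
  rewrite rsum_Sl. replace (S m - 1)%nat with m by lia.
  assert (E0 : pair_tangential rho rho c (ang (S m) 0) = 0).
  { unfold pair_tangential. rewrite ang_0, cos_0. unfold Rdiv. ring_simplify. ring. }
  rewrite E0, Rplus_0_l, <- rsum_const. apply rsum_ext. intros k Hk.
  pose proof (cos_ang_neq_1 (S m) (S k) ltac:(lia)) as Hc.
  pose proof (COS_bound (ang (S m) (S k))).
  unfold pair_tangential.
  replace (rho ^ 2 + rho ^ 2 - 2 * rho * rho * cos (ang (S m) (S k)))
    with (2 * rho ^ 2 * (1 - cos (ang (S m) (S k)))) by ring.
  field. split; [lra|]. intros E. apply Hc. lra.
Qed.

Lemma rsum_pair_tangential_cross r1 r2 c n : 0 < r1 -> 0 < r2 -> r1 <> r2 ->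
  r1 * rsum (fun k => pair_tangential r1 r2 c (ang n k)) n
  + r2 * rsum (fun k => pair_tangential r2 r1 c (ang n k)) n = c * INR n.
Proof.
  intros H1 H2 Hne. rewrite <- !rsum_scal_l, <- rsum_plus, Rmult_comm, <- rsum_const.
  apply rsum_ext. intros k _. pose proof (COS_bound (ang n k)). set (co := cos (ang n k)) in *.
  assert (HD : 0 < r1 ^ 2 + r2 ^ 2 - 2 * r1 * r2 * co).
  { assert (0 < (r1 - r2) ^ 2) by (apply pow2_gt_0; lra).
    assert (0 <= r1 * r2 * (1 - co)) by (apply Rmult_le_pos; [nra|lra]). nra. }
  unfold pair_tangential. fold co.
  replace (r2 ^ 2 + r1 ^ 2 - 2 * r2 * r1 * co) with (r1 ^ 2 + r2 ^ 2 - 2 * r1 * r2 * co) by ring.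
  field. lra.
Qed.

Lemma map_seq_offset {A} (f : nat -> A) s m :
  map f (seq s m) = map (fun j => f (s + j)%nat) (seq 0 m).
Proof.
  revert f. induction s as [|s IH]; intros f; [reflexivity|].
  rewrite <- seq_shift, map_map, IH. reflexivity.
Qed.

Lemma rot_pos_first n r1 r2 w i t : (i < n)%nat ->
  rot_pos n r1 r2 w i t = ring_pt r1 (ang n i + w * t).
Proof. intros Hi. unfold rot_pos. destruct (Nat.ltb_spec i n); [reflexivity|lia]. Qed.

Lemma rot_pos_second n r1 r2 w i t :
  rot_pos n r1 r2 w (n + i) t = ring_pt r2 (ang n i + w * t).
Proof.
  unfold rot_pos. destruct (Nat.ltb_spec (n + i) n); [lia|].
  replace (n + i - n)%nat with i by lia. reflexivity.
Qed.

Lemma deg_first n i : (i < n)%nat -> deg n i = 1.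
Proof. intros Hi. unfold deg. destruct (Nat.ltb_spec i n); [reflexivity|lia]. Qed.

Lemma deg_second n i : deg n (n + i) = -1.
Proof. unfold deg. destruct (Nat.ltb_spec (n + i) n); [lia|reflexivity]. Qed.

Lemma rotating_interaction n r1 r2 w t d rho k : (0 < n)%nat -> 0 < rho ->
  fold_right vadd (0, 0)
    (map (fun j => biot_savart (2 * d * deg n j) (ring_pt rho (ang n k + w * t))
                               (rot_pos n r1 r2 w j t)) (seq 0 (2 * n)))
  = vscal ((rsum (fun m => pair_tangential rho r1 (2 * d) (ang n m)) n
            + rsum (fun m => pair_tangential rho r2 (- (2 * d)) (ang n m)) n) / rho)
          (perp (ring_pt rho (ang n k + w * t))).
Proof.
  intros Hn Hrho. set (p := ring_pt rho (ang n k + w * t)).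
  set (F := fun j => biot_savart (2 * d * deg n j) p (rot_pos n r1 r2 w j t)).
  assert (Hfirst : map F (seq 0 n)
    = map (fun j => biot_savart (2 * d) p (ring_pt r1 (ang n j + w * t))) (seq 0 n)).
  { apply map_ext_in. intros j Hj. apply in_seq in Hj. unfold F.
    rewrite deg_first, rot_pos_first, Rmult_1_r by lia. reflexivity. }
  assert (Hsecond : map F (seq n n)
    = map (fun j => biot_savart (- (2 * d)) p (ring_pt r2 (ang n j + w * t))) (seq 0 n)).
  { rewrite map_seq_offset. apply map_ext. intros j. unfold F.
    rewrite deg_second, rot_pos_second. f_equal. ring. }
  replace (2 * n)%nat with (n + n)%nat by lia.
  rewrite seq_app, Nat.add_0_l, map_app, fold_vadd_app, Hfirst, Hsecond.
  unfold p. rewrite !biot_savart_ring_sum, vadd_vscal, Rdiv_plus_distr by assumption.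
  reflexivity.
Qed.

Lemma rotating_vortex_solves alpha S n r1 r2 w t i k ph d :
  (0 < n)%nat -> 0 < ph < PI -> deg n i = d -> 0 < alpha (S ph) ->
  (forall u, rot_pos n r1 r2 w i u = ring_pt (stereo_radius ph) (ang n k + w * u)) ->
  d * w * alpha (S ph) ^ 2 = 1 - Derive alpha (S ph) + stereo_radius ph *
    (rsum (fun m => pair_tangential (stereo_radius ph) r1 (2 * d) (ang n m)) n
     + rsum (fun m => pair_tangential (stereo_radius ph) r2 (- (2 * d)) (ang n m)) n) ->
  exists v : vec2,
    is_derive (fun u => fst (rot_pos n r1 r2 w i u)) t (fst v) /\
    is_derive (fun u => snd (rot_pos n r1 r2 w i u)) t (snd v) /\
    vscal (deg n i) v = vortex_rhs alpha S (2 * n) (deg n) (fun j => rot_pos n r1 r2 w j t) i.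
Proof.
  intros Hn Hph Hdeg Ha Hpos Hw.
  pose proof (stereo_radius_pos ph Hph) as Hrho.
  exists (vscal w (perp (ring_pt (stereo_radius ph) (ang n k + w * t)))).
  split; [|split].
  - apply (is_derive_ext (fun u => stereo_radius ph * cos (ang n k + w * u))).
    { intros u. rewrite Hpos. reflexivity. }
    unfold vscal, perp, ring_pt; simpl. auto_derive; [exact I|ring].
  - apply (is_derive_ext (fun u => stereo_radius ph * sin (ang n k + w * u))).
    { intros u. rewrite Hpos. reflexivity. }
    unfold vscal, perp, ring_pt; simpl. auto_derive; [exact I|ring].
  - rewrite vortex_rhs_biot_savart, Hpos, Hdeg, phi_of_ring_pt, norm2sq_ring_pt,
      rotating_interaction by assumption.
    set (rho := stereo_radius ph) in *.
    unfold vscal, vadd, perp, ring_pt; simpl. f_equal; field_simplify_eq; try nra; lra.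
Qed.

(* The ring of degree -1 vortices sits at the mirror latitude, where [alpha]
   agrees and [alpha'] changes sign; then one angular speed balances both rings. *)
Lemma rotating_config_solves alpha S n ph1 ph2 : (0 < n)%nat ->
  0 < ph1 < PI -> 0 < ph2 < PI -> stereo_radius ph1 <> stereo_radius ph2 -> 0 < alpha (S ph1) ->
  alpha (S ph2) = alpha (S ph1) -> Derive alpha (S ph2) = - Derive alpha (S ph1) ->
  exists w, solves_vortex_system alpha S (2 * n) (deg n)
              (rot_pos n (stereo_radius ph1) (stereo_radius ph2) w).
Proof.
  intros Hn Hph1 Hph2 Hr Ha Ea Ed.
  pose proof (stereo_radius_pos ph1 Hph1) as Hr1. pose proof (stereo_radius_pos ph2 Hph2) as Hr2.
  set (r1 := stereo_radius ph1) in *. set (r2 := stereo_radius ph2) in *.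
  set (C1 := rsum (fun m => pair_tangential r1 r2 (- (2 * 1)) (ang n m)) n).
  pose proof (rsum_pair_tangential_cross r1 r2 (- (2 * 1)) n Hr1 Hr2 Hr) as Hcross.
  pose proof (rsum_pair_tangential_same r1 (2 * 1) n Hr1 Hn) as Hsame1.
  pose proof (rsum_pair_tangential_same r2 (- (2 * -1)) n Hr2 Hn) as Hsame2.
  assert (HnI : INR (n - 1) = INR n - 1) by (rewrite minus_INR by lia; simpl; ring).
  exists ((INR n - Derive alpha (S ph1) + r1 * C1) / alpha (S ph1) ^ 2).
  intros i t Hi. destruct (Nat.lt_ge_cases i n) as [Hin|Hin].
  - apply (rotating_vortex_solves alpha S n r1 r2 _ t i i ph1 1); auto.
    + apply deg_first, Hin.
    + intros u. apply rot_pos_first, Hin.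
    + fold r1 C1. rewrite Hsame1, HnI. field. split; lra.
  - replace i with (n + (i - n))%nat by lia.
    apply (rotating_vortex_solves alpha S n r1 r2 _ t _ (i - n) ph2 (-1)); auto.
    + apply deg_second.
    + rewrite Ea. exact Ha.
    + intros u. apply rot_pos_second.
    + fold r2. rewrite Hsame2, HnI, Ea, Ed.
      replace (2 * -1) with (- (2 * 1)) by ring.
      assert (HC2 : r2 * rsum (fun m => pair_tangential r2 r1 (- (2 * 1)) (ang n m)) n
                    = - (2 * 1) * INR n - r1 * C1) by (unfold C1; lra).
      rewrite Rmult_plus_distr_l, HC2. field. split; lra.
Qed.

Lemma ring_pt_angles_distinct rho n i j x : 0 < rho -> (i < n)%nat -> (j < n)%nat -> i <> j ->
  ring_pt rho (ang n i + x) <> ring_pt rho (ang n j + x).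
Proof.
  intros Hrho Hi Hj Hij E. unfold ring_pt in E. injection E as Ec Es.
  apply Rmult_eq_reg_l in Ec, Es; try lra.
  assert (Hcos : forall u v, cos u = cos v -> sin u = sin v -> cos (v - u) = 1).
  { intros u v Hc Hs. rewrite cos_minus, Hc, Hs. pose proof (sin2_cos2 v). unfold Rsqr in *. lra. }
  destruct (Nat.lt_ge_cases i j) as [Hlt|Hge].
  - apply (cos_ang_neq_1 n (j - i)); [lia|].
    rewrite ang_sub by lia. replace (ang n j - ang n i) with ((ang n j + x) - (ang n i + x)) by ring.
    apply Hcos; assumption.
  - apply (cos_ang_neq_1 n (i - j)); [lia|].
    rewrite ang_sub by lia. replace (ang n i - ang n j) with ((ang n i + x) - (ang n j + x)) by ring.
    apply Hcos; symmetry; assumption.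
Qed.

Lemma rot_pos_distinct n r1 r2 w t i j : 0 < r1 -> 0 < r2 -> r1 <> r2 ->
  (i < 2 * n)%nat -> (j < 2 * n)%nat -> i <> j ->
  rot_pos n r1 r2 w i t <> rot_pos n r1 r2 w j t.
Proof.
  intros Hr1 Hr2 Hr Hi Hj Hij.
  assert (Hrings : forall i' j', ring_pt r1 (ang n i' + w * t) <> ring_pt r2 (ang n j' + w * t)).
  { intros i' j' E. apply (f_equal norm2sq) in E. rewrite !norm2sq_ring_pt in E.
    apply Hr. nra. }
  destruct (Nat.lt_ge_cases i n), (Nat.lt_ge_cases j n).
  - rewrite !rot_pos_first by assumption. apply ring_pt_angles_distinct; assumption.
  - replace j with (n + (j - n))%nat by lia.
    rewrite rot_pos_first, rot_pos_second by assumption. apply Hrings.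
  - replace i with (n + (i - n))%nat by lia.
    rewrite rot_pos_second, rot_pos_first by assumption. intros E. exact (Hrings _ _ (eq_sym E)).
  - replace i with (n + (i - n))%nat by lia. replace j with (n + (j - n))%nat by lia.
    rewrite !rot_pos_second. apply ring_pt_angles_distinct; [assumption|lia..].
Qed.

Theorem proposition1
  (alpha beta : R -> R) (l : R) (S : R -> R)
  (hl : 0 < l)
  (halpha_smooth : smooth alpha) (hbeta_smooth : smooth beta)
  (harc : forall s, 0 <= s <= l -> (Derive alpha s) ^ 2 + (Derive beta s) ^ 2 = 1)
  (hpos : forall s, 0 < s < l -> 0 < alpha s)
  (ha0 : alpha 0 = 0) (hal : alpha l = 0)
  (hb0 : Derive beta 0 = 0) (hbl : Derive beta l = 0)
  (hS_range : forall ph, 0 <= ph <= PI -> 0 <= S ph <= l)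
  (hS_cont : forall ph, 0 <= ph <= PI ->
     filterlim S (within (fun x => 0 <= x <= PI) (locally ph)) (locally (S ph)))
  (hS_ode : forall ph, 0 < ph < PI ->
     exists dS, is_derive S ph dS /\ dS * sin ph = alpha (S ph))
  (hS0 : S 0 = 0) (hSpi : S PI = l)
  (hsym : forall q, on_surface alpha beta l q -> on_surface alpha beta l (reflXY q))
  : forall n : nat, (1 <= n)%nat ->
    exists r1 r2 w0 : R,
      0 < r1 /\ 0 < r2 /\
      (forall t i j, (i < 2 * n)%nat -> (j < 2 * n)%nat -> i <> j ->
         rot_pos n r1 r2 w0 i t <> rot_pos n r1 r2 w0 j t) /\
      solves_vortex_system alpha S (2 * n) (deg n) (rot_pos n r1 r2 w0) /\
      (forall q, orbit alpha beta S r1 q <-> orbit alpha beta S r2 (reflXY q)).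
Proof.
  (* Only the continuity and the end values of S are needed, not its ODE. *)
  intros n Hn.
  destruct (mirror_pair alpha beta l hl halpha_smooth hbeta_smooth harc hpos ha0 hal hb0 hbl hsym)
    as [s1 [s2 [Hs1 [Hs2 [Hne [Ea [Eb Ed]]]]]]].
  destruct (S_onto_interior S l s1 hS_cont hS0 hSpi Hs1) as [ph1 [Hph1 <-]].
  destruct (S_onto_interior S l s2 hS_cont hS0 hSpi Hs2) as [ph2 [Hph2 <-]].
  assert (Hr : stereo_radius ph1 <> stereo_radius ph2).
  { intros E. apply Hne. f_equal. exact (stereo_radius_injective ph1 ph2 Hph1 Hph2 E). }
  destruct (rotating_config_solves alpha S n ph1 ph2) as [w0 Hsolves]; auto.
  exists (stereo_radius ph1), (stereo_radius ph2), w0.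
  split; [apply stereo_radius_pos, Hph1|split; [apply stereo_radius_pos, Hph2|]].
  split; [|split; [exact Hsolves|]].
  - intros t i j. apply rot_pos_distinct; auto using stereo_radius_pos.
  - apply orbits_mirror; assumption.
Qed.
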